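(* Let $K\subset S^3$ be a knot and $M$ its exterior. Let $\rho:\pi_1(M)\to\mathrm{PSL}(2,\mathbb{C})$ be a boundary-parabolic representation. Then the obstruction class of $\rho$, viewed as an element of $H^2(M,\partial M;\{\pm1\})\cong\{\pm1\}$, equals $\tfrac12\mathrm{tr}(\widetilde\rho(\lambda))$, where $\widetilde\rho:\pi_1(M)\to\mathrm{SL}(2,\mathbb{C})$ is any lift of $\rho$ and $\lambda$ is the canonical longitude of $K$.
   Context: $P\subset\mathrm{PSL}(2,\mathbb{C})$ (resp. $\mathrm{SL}(2,\mathbb{C})$) denotes the subgroup of upper triangular matrices with ones on the diagonal. A representation is boundary-parabolic if it maps the peripheral subgroup $\pi_1(\partial M)$ into a conjugate of $P$. The obstruction class of a boundary-parabolic $\rho$ is the obstruction in $H^2(M,\partial M;\{\pm1\})$ to lifting $\rho$ to a boundary-parabolic $\mathrm{SL}(2,\mathbb{C})$-representation (image of $\rho$ under the connecting map associated with $1\to\{\pm1\}\to\mathrm{SL}(2,\mathbb{C})\to\mathrm{PSL}(2,\mathbb{C})\to1$ on cocycles that take values in $P$ on $\partial M$); under $H^2(M,\partial M;\{\pm1\})\cong\{\pm1\}$ it is $+1$ iff such a lift exists. *)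

(* Knots are presented as closures of braids (Alexander's
   theorem), pi_1 of the exterior via the Wirtinger/Artin presentation of the
   closed-braid diagram. *)
From mathcomp Require Import all_boot all_order all_algebra.
From mathcomp Require Import complex reals.

Set Implicit Arguments.
Unset Strict Implicit.
Unset Printing Implicit Defensive.
Import Order.TTheory GRing.Theory Num.Theory.
Local Open Scope ring_scope.

Section BraidKnot.
Variable F : fieldType.
Notation M := 'M[F]_2.

(* A braid word on n strands: a generator is (k, true) = sigma_k,
   (k, false) = sigma_k^{-1}, acting on positions k, k+1 (0-based). *)
Definition braid_word := seq (nat * bool).

Definition braid_word_ok (n : nat) (w : braid_word) : bool :=
  all (fun g => (g.1.+1 < n)%N) w.

Definition pos_step (g : nat * bool) (p : nat) : nat :=
  if p == g.1 then g.1.+1 else if p == g.1.+1 then g.1 else p.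
Definition braid_perm (w : braid_word) (p : nat) : nat :=
  foldl (fun q g => pos_step g q) p w.

(* the closure of the braid is a knot (one component): the permutation
   acts transitively (as a single n-cycle) on the positions 0..n-1 *)
Definition closure_is_knot (n : nat) (w : braid_word) : Prop :=
  (0 < n)%N /\ forall p, (p < n)%N -> exists j, iter j (braid_perm w) 0%N = p.

(* Wirtinger (Artin) labels: meridian label of the arc at each position,
   propagated through one crossing.  The over-strand keeps its label, the
   under-strand label is conjugated by the over-strand label. *)
Definition wstep (g : nat * bool) (a : nat -> M) : nat -> M :=
  fun p =>
    let k := g.1 in
    if g.2 then
      (if p == k then a k * a k.+1 * (a k)^-1
       else if p == k.+1 then a k else a p)
    else
      (if p == k then a k.+1
       else if p == k.+1 then (a k.+1)^-1 * a k * a k.+1 else a p).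

Definition wlabels (w : braid_word) (a : nat -> M) : nat -> M :=
  foldl (fun b g => wstep g b) a w.

(* One pass of the walk along the knot through the braid, starting at
   position p with accumulated word P.  Every time the walk passes under
   the over-strand with label x at a crossing where the under-arc label is
   conjugated by x^e, the word becomes x^e * P. *)
Definition walk_step (g : nat * bool) (s : (nat -> M) * nat * M)
    : (nat -> M) * nat * M :=
  let: (b, p, P) := s in
  let k := g.1 in
  let b' := wstep g b in
  if g.2 then
    (if p == k then (b', k.+1, P)
     else if p == k.+1 then (b', k, b k * P) else (b', p, P))
  else
    (if p == k.+1 then (b', k, P)
     else if p == k then (b', k.+1, (b k.+1)^-1 * P) else (b', p, P)).

Definition walk_pass (w : braid_word) (a : nat -> M) (s : nat * M) : nat * M :=
  let: (b, p, P) := foldl (fun t g => walk_step g t) (a, s.1, s.2) w in (p, P).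

Definition exp_sum (w : braid_word) : int :=
  \sum_(g <- w) (if g.2 then 1 else -1).

(* meridian of the knot: the arc at position 0 at the top of the braid *)
Definition meridian_img (a : nat -> M) : M := a 0%N.

(* canonical (null-homologous) longitude: blackboard parallel read off
   along the n passes, corrected by the meridian to the power -writhe *)
Definition longitude_img (n : nat) (w : braid_word) (a : nat -> M) : M :=
  (iter n (walk_pass w a) (0%N, 1)).2 * (a 0%N) ^ (- exp_sum w).

(* A PSL(2,F)-representation of the knot group, given by SL(2,F)
   representatives a p of the images of the Wirtinger generators: the
   closing relations hold in PSL, i.e. up to sign. *)
Definition psl_rep (n : nat) (w : braid_word) (a : nat -> M) : Prop :=
  (forall p, (p < n)%N -> \det (a p) = 1) /\
  (forall p, (p < n)%N -> wlabels w a p = a p \/ wlabels w a p = - a p).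

Definition sl_lift (n : nat) (w : braid_word) (a h : nat -> M) : Prop :=
  (forall p, (p < n)%N -> h p = a p \/ h p = - a p) /\
  (forall p, (p < n)%N -> wlabels w h p = h p).

Definition in_P (A : M) : Prop :=
  A 1 0 = 0 /\ A 0 0 = 1 /\ A 1 1 = 1.
Definition in_P_pm (A : M) : Prop := in_P A \/ in_P (- A).

(* boundary-parabolic: the peripheral subgroup <meridian, longitude> is
   mapped into a conjugate of P (in PSL) *)
Definition psl_boundary_parabolic (n : nat) (w : braid_word) (a : nat -> M)
    : Prop :=
  exists B : M, \det B = 1 /\
    in_P_pm (B^-1 * meridian_img a * B) /\
    in_P_pm (B^-1 * longitude_img n w a * B).

Definition sl_boundary_parabolic (n : nat) (w : braid_word) (h : nat -> M)
    : Prop :=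
  exists B : M, \det B = 1 /\
    in_P (B^-1 * meridian_img h * B) /\
    in_P (B^-1 * longitude_img n w h * B).

(* obstruction class, as an element of {1, -1} (the image of
   H^2(M, dM; {+-1}) = {+-1}): +1 iff a boundary-parabolic SL lift exists *)
Definition obstruction_class (n : nat) (w : braid_word) (a : nat -> M)
    (e : F) : Prop :=
  (e = 1 /\ exists h, sl_lift n w a h /\ sl_boundary_parabolic n w h) \/
  (e = -1 /\ ~ exists h, sl_lift n w a h /\ sl_boundary_parabolic n w h).

End BraidKnot.

From mathcomp Require Import all_boot all_order all_algebra.
From mathcomp Require Import complex reals.
From mathcomp Require Import zify.

Set Implicit Arguments.
Unset Strict Implicit.
Unset Printing Implicit Defensive.
Import GRing.Theory Num.Theory.

(* Two SL(2)-lifts of a PSL(2)-representation differ by a sign on each Wirtinger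
   generator.  Propagating signs through the braid multiplies every label, and every
   letter of the longitude word, by a sign; the closing relations then force the sign
   to be invariant under the braid permutation, hence constant because the closure is a
   knot.  A constant sign e changes the longitude by e^(#crossings - writhe) = 1, so all
   lifts have the same longitude matrix L.  Conjugated by the matrix B putting the
   peripheral subgroup into ±P, L lands in P or in -P.  In the first case tr L = 2 and h
   or -h is a boundary-parabolic lift; in the second tr L = -2, while a boundary-parabolic
   lift would give tr L = 2, which is impossible as 2 != 0. *)

Lemma pos_stepK g : involutive (pos_step g).
Proof. by case: g => k b p; rewrite /pos_step /=; repeat (case: eqP => /=); lia. Qed.

Lemma pos_step_lt n g p : g.1.+1 < n -> p < n -> pos_step g p < n.
Proof. by case: g => k b /= hk hp; rewrite /pos_step /=; repeat (case: eqP => /=); lia. Qed.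

Lemma braid_perm_cons g w p : braid_perm (g :: w) p = braid_perm w (pos_step g p).
Proof. by []. Qed.

Lemma braid_perm_lt n w p : braid_word_ok n w -> p < n -> braid_perm w p < n.
Proof.
elim: w p => [//|g w IH] p /andP[hg hw] hp.
by rewrite braid_perm_cons IH // pos_step_lt.
Qed.

Lemma iter_braid_perm_lt n w j : braid_word_ok n w -> 0 < n ->
  iter j (braid_perm w) 0 < n.
Proof. by move=> ok n0; elim: j => [//|j IH] /=; apply: braid_perm_lt. Qed.

Definition braid_perm_inv (w : braid_word) (q : nat) : nat := foldr pos_step q w.

Lemma braid_permK w : cancel (braid_perm w) (braid_perm_inv w).
Proof.
elim: w => [//|g w IH] p.
by rewrite braid_perm_cons /braid_perm_inv /= -/(braid_perm_inv w _) IH pos_stepK.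
Qed.

Lemma iter_inj (T : Type) (f : T -> T) i : injective f -> injective (iter i f).
Proof. by move=> f_inj; elim: i => [//|i IH] x y /= /f_inj /IH. Qed.

Lemma iter_mod_period (T : Type) (f : T -> T) x d m :
  iter d f x = x -> iter m f x = iter (m %% d) f x.
Proof.
move=> hd; rewrite {1}(divn_eq m d) addnC iterD; congr iter.
by elim: (m %/ d) => [//|q IH]; rewrite mulSn iterD IH hd.
Qed.

Lemma knot_orbit_uniq n w : braid_word_ok n w -> closure_is_knot n w ->
  uniq [seq iter i (braid_perm w) 0 | i <- iota 0 n].
Proof.
move=> ok [n0 onto]; set f := braid_perm w.
have f_inj : injective f := can_inj (@braid_permK w).
suff no_period i j : i < j < n -> iter i f 0 <> iter j f 0.
  rewrite map_inj_in_uniq ?iota_uniq // => i j.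
  rewrite !mem_iota /= => hi hj eq_ij.
  case: (ltngtP i j) => // [lt_ij|lt_ji].
    by case: (no_period i j); rewrite ?lt_ij.
  by case: (no_period j i); rewrite ?lt_ji.
case/andP=> lt_ij lt_jn; rewrite -(subnKC (ltnW lt_ij)) iterD.
move=> /esym/(iter_inj f_inj).
set d := j - i => period.
have : {subset iota 0 n <= [seq iter m f 0 | m <- iota 0 d]}.
  move=> p; rewrite mem_iota /= => /onto [m <-].
  rewrite (iter_mod_period _ period); apply: map_f.
  by rewrite mem_iota /= ltn_mod /d subn_gt0.
by move/(uniq_leq_size (iota_uniq 0 n)); rewrite size_map !size_iota /d; lia.
Qed.

Lemma knot_orbit_perm n w : braid_word_ok n w -> closure_is_knot n w ->
  perm_eq [seq iter i (braid_perm w) 0 | i <- iota 0 n] (iota 0 n).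
Proof.
move=> ok kn; have [n0 _] := kn.
apply: uniq_perm; rewrite ?iota_uniq ?knot_orbit_uniq //.
apply: (uniq_min_size (knot_orbit_uniq ok kn) _ _).2; last by rewrite size_map.
by move=> _ /mapP[i _ ->]; rewrite mem_iota /= iter_braid_perm_lt.
Qed.

Lemma perm_map_pos_step n g : g.1.+1 < n ->
  perm_eq [seq pos_step g p | p <- iota 0 n] (iota 0 n).
Proof.
move=> hg; apply: uniq_perm; rewrite ?iota_uniq //.
  by rewrite map_inj_uniq ?iota_uniq //; apply: can_inj (pos_stepK g).
move=> p; rewrite mem_iota /=; apply/mapP/idP => [[q]|hp].
  by rewrite mem_iota /= => hq ->; apply: pos_step_lt.
by exists (pos_step g p); rewrite ?pos_stepK // mem_iota /= pos_step_lt.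
Qed.

Definition is_under (g : nat * bool) (p : nat) : bool :=
  if g.2 then p == g.1.+1 else p == g.1.

Fixpoint under_count (w : braid_word) (p : nat) : nat :=
  if w is g :: w' then is_under g p + under_count w' (pos_step g p) else 0.

Lemma sum_is_under n g : g.1.+1 < n -> \sum_(p <- iota 0 n) is_under g p = 1.
Proof.
move=> hg.
have -> : \sum_(p <- iota 0 n) is_under g p =
    count_mem (if g.2 then g.1.+1 else g.1) (iota 0 n).
  rewrite -sum1_count [RHS]big_mkcond /=; apply: eq_bigr => p _.
  by rewrite /is_under; case: g.2; rewrite eq_sym; case: eqP.
rewrite count_uniq_mem ?iota_uniq // mem_iota /=.
by case: g.2; rewrite ?hg ?(ltn_trans (ltnSn _) hg).
Qed.

Lemma sum_under_count n w : braid_word_ok n w ->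
  \sum_(p <- iota 0 n) under_count w p = size w.
Proof.
elim: w => [|g w IH] /=; first by rewrite big1.
case/andP=> hg hw; rewrite big_split /= sum_is_under // add1n.
by rewrite -(big_map (pos_step g) xpredT) (perm_big _ (perm_map_pos_step hg)) IH.
Qed.

Local Open Scope ring_scope.

Section SignTwist.
Variable F : fieldType.
Notation M := 'M[F]_2.

Definition is_sign (t : F) : Prop := t = 1 \/ t = -1.

Lemma is_signM s t : is_sign s -> is_sign t -> is_sign (s * t).
Proof. by case=> ->; case=> ->; rewrite ?mulr1 ?mulrN1 ?opprK; [left|right|right|left]. Qed.

Lemma is_signX t m : is_sign t -> is_sign (t ^+ m).
Proof.
move=> ht; elim: m => [|m IH]; first by left; rewrite expr0.
by rewrite exprS; apply: is_signM.
Qed.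

Lemma is_sign_prod (I : Type) (r : seq I) (f : I -> F) :
  (forall i, is_sign (f i)) -> is_sign (\prod_(i <- r) f i).
Proof.
move=> hf; elim: r => [|i r IH]; first by rewrite big_nil; left.
by rewrite big_cons; apply: is_signM.
Qed.

Lemma signMss t : is_sign t -> t * t = 1.
Proof. by case=> ->; rewrite ?mulr1 ?mulrNN ?mulr1. Qed.

Lemma signV t : is_sign t -> t^-1 = t.
Proof. by case=> ->; rewrite ?invr1 // invrN invr1. Qed.

Lemma signZV t (A : M) : is_sign t -> (t *: A)^-1 = t *: A^-1.
Proof. by case=> ->; rewrite ?scale1r // !scaleN1r invrN. Qed.

Lemma signX_abs t (z : int) : is_sign t -> t ^ z = t ^+ `|z|%N.
Proof. by move=> ht; case: z => m //; rewrite /exprz signV //; apply: is_signX. Qed.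

Lemma is_sign_expz t (z : int) : is_sign t -> is_sign (t ^ z).
Proof. by move=> ht; rewrite signX_abs //; apply: is_signX. Qed.

Lemma signZ_expz t (A : M) (z : int) : is_sign t -> (t *: A) ^ z = t ^ z *: A ^ z.
Proof.
move=> ht; case: z => m; rewrite /exprz exprZn //.
by rewrite signZV ?signV //; apply: is_signX.
Qed.

Lemma sign_expz_exp_sum e w : is_sign e -> e ^ (- exp_sum w) = e ^+ size w.
Proof.
move=> he; rewrite signX_abs // abszN -signX_abs //.
elim: w => [|g w IH]; first by rewrite /exp_sum big_nil expr0z.
rewrite /exp_sum big_cons -/(exp_sum w) exprzDr ?IH /= ?exprS; last first.
  by case: he => ->; rewrite ?unitr1 ?unitrN1.
by case: g.2; rewrite ?expr1z ?exprN1 ?signV.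
Qed.

Lemma scalerMM s t (A B : M) : (s *: A) * (t *: B) = (s * t) *: (A * B).
Proof. by rewrite -scalerAl -scalerAr scalerA. Qed.

Definition crossing_word (g : nat * bool) (b : nat -> M) (p : nat) : M :=
  if g.2 then (if p == g.1.+1 then b g.1 else 1)
  else (if p == g.1 then (b g.1.+1)^-1 else 1).

Fixpoint walk_word (w : braid_word) (b : nat -> M) (p : nat) : M :=
  if w is g :: w' then walk_word w' (wstep g b) (pos_step g p) * crossing_word g b p
  else 1.

Lemma walk_stepE g (b : nat -> M) p P :
  walk_step g (b, p, P) = (wstep g b, pos_step g p, crossing_word g b p * P).
Proof.
case: g => k [] /=; rewrite /walk_step /pos_step /crossing_word /=.
  case: (p =P k) => [->|_]; rewrite ?(ltn_eqF (ltnSn k)) ?mul1r //.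
  by case: eqP; rewrite ?mul1r.
case: (p =P k.+1) => [->|_]; rewrite ?(gtn_eqF (ltnSn k)) ?mul1r //.
by case: eqP; rewrite ?mul1r.
Qed.

Lemma walk_passE w (b : nat -> M) p P :
  walk_pass w b (p, P) = (braid_perm w p, walk_word w b p * P).
Proof.
rewrite /walk_pass /=; suff -> : foldl (fun t g => walk_step g t) (b, p, P) w =
    (wlabels w b, braid_perm w p, walk_word w b p * P) by [].
elim: w b p P => [|g w IH] b p P; first by rewrite /= mul1r.
by rewrite -[foldl _ _ (g :: w)]/(foldl _ (walk_step g (b, p, P)) w) walk_stepE IH mulrA.
Qed.

Lemma iter_walk_pass_fst w (b : nat -> M) j s :
  (iter j (walk_pass w b) s).1 = iter j (braid_perm w) s.1.
Proof.
elim: j => [//|j /= <-].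
by case: (iter j (walk_pass w b) s) => p P; rewrite walk_passE.
Qed.

(* The sign by which crossing_word changes under a twist: signs are their own inverses,
   so a negative crossing contributes c rather than c^-1. *)
Definition crossing_sign (g : nat * bool) (c : nat -> F) (p : nat) : F :=
  if g.2 then (if p == g.1.+1 then c g.1 else 1)
  else (if p == g.1 then c g.1.+1 else 1).

Fixpoint walk_sign (w : braid_word) (c : nat -> F) (p : nat) : F :=
  if w is g :: w'
  then walk_sign w' (c \o pos_step g) (pos_step g p) * crossing_sign g c p
  else 1.

Lemma is_sign_walk_sign w c p : (forall q, is_sign (c q)) -> is_sign (walk_sign w c p).
Proof.
elim: w c p => [|g w IH] c p hc /=; first by left.
apply: is_signM; first by apply: IH => q; apply: hc.
by rewrite /crossing_sign; case: g.2; case: ifP => _; first [exact: hc | left].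
Qed.

Lemma walk_sign_const w e p : walk_sign w (fun=> e) p = e ^+ under_count w p.
Proof.
elim: w p => [|g w IH] p /=; first by rewrite expr0.
rewrite IH addnC exprD; congr (_ * _).
by rewrite /crossing_sign /is_under; case: g.2; case: eqP.
Qed.

Definition sign_twist (n : nat) (c : nat -> F) (b1 b2 : nat -> M) : Prop :=
  (forall q, is_sign (c q)) /\ forall q, (q < n)%N -> b2 q = c q *: b1 q.

Lemma wstep_twist n g c (b1 b2 : nat -> M) : (g.1.+1 < n)%N ->
  sign_twist n c b1 b2 -> sign_twist n (c \o pos_step g) (wstep g b1) (wstep g b2).
Proof.
move=> hk [c_sign b2_twist]; split=> [q|]; first exact: c_sign.
have conj_sign s t (A B : M) : is_sign s ->
    (s *: A) * (t *: B) * (s *: A)^-1 = t *: (A * B * A^-1).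
  by move=> hs; rewrite signZV // !scalerMM mulrC mulrA signMss ?mul1r.
have conjV_sign s t (A B : M) : is_sign s ->
    (s *: A)^-1 * (t *: B) * (s *: A) = t *: (A^-1 * B * A).
  by move=> hs; rewrite signZV // !scalerMM mulrC mulrA signMss ?mul1r.
case: g hk => k [] /= hk q hq; have hk' : (k < n)%N by lia.
all: rewrite /wstep /pos_step /=.
all: case: (q =P k) => [eqk|_]; last case: (q =P k.+1) => [eqk|_].
all: try subst q; rewrite ?eqxx ?(ltn_eqF (ltnSn k)) ?(gtn_eqF (ltnSn k)).
all: by rewrite !b2_twist ?(conj_sign _ _ _ _ (c_sign _)) ?(conjV_sign _ _ _ _ (c_sign _)).
Qed.

Lemma wlabels_twist n w c (b1 b2 : nat -> M) : braid_word_ok n w ->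
  sign_twist n c b1 b2 ->
  sign_twist n (c \o braid_perm_inv w) (wlabels w b1) (wlabels w b2).
Proof.
elim: w c b1 b2 => [//|g w IH] c b1 b2 /andP[hg hw] tw.
exact: (IH _ _ _ hw (wstep_twist hg tw)).
Qed.

Lemma crossing_word_twist n g c (b1 b2 : nat -> M) p : (g.1.+1 < n)%N ->
  sign_twist n c b1 b2 ->
  crossing_word g b2 p = crossing_sign g c p *: crossing_word g b1 p.
Proof.
case: g => k [] /= hk [c_sign b2_twist]; rewrite /crossing_word /crossing_sign /=.
  by case: eqP => _; rewrite ?scale1r // b2_twist //; lia.
by case: eqP => _; rewrite ?scale1r // b2_twist // signZV.
Qed.

Lemma walk_word_twist n w c (b1 b2 : nat -> M) p : braid_word_ok n w ->
  sign_twist n c b1 b2 -> walk_word w b2 p = walk_sign w c p *: walk_word w b1 p.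
Proof.
elim: w c b1 b2 p => [|g w IH] c b1 b2 p /=; first by rewrite scale1r.
case/andP=> hg hw tw.
by rewrite (IH _ _ _ _ hw (wstep_twist hg tw)) (crossing_word_twist _ hg tw) scalerMM.
Qed.

Lemma iter_walk_pass_twist n w c (b1 b2 : nat -> M) j :
  braid_word_ok n w -> sign_twist n c b1 b2 ->
  iter j (walk_pass w b2) (0%N, 1) =
    ((iter j (walk_pass w b1) (0%N, 1)).1,
     (\prod_(i < j) walk_sign w c (iter i (braid_perm w) 0%N)) *:
       (iter j (walk_pass w b1) (0%N, 1)).2).
Proof.
move=> ok tw; elim: j => [|j /= ->]; first by rewrite /= big_ord0 scale1r.
have := iter_walk_pass_fst w b1 j (0%N, 1).
case: (iter j (walk_pass w b1) _) => p P /= ->.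
by rewrite !walk_passE (walk_word_twist _ ok tw) scalerMM big_ord_recr mulrC.
Qed.

Lemma longitude_twist n w c (b1 b2 : nat -> M) : (0 < n)%N ->
  braid_word_ok n w -> sign_twist n c b1 b2 ->
  longitude_img n w b2 =
    ((\prod_(i < n) walk_sign w c (iter i (braid_perm w) 0%N)) * c 0%N ^ (- exp_sum w))
      *: longitude_img n w b1.
Proof.
move=> n0 ok tw; have [c_sign b2_twist] := tw.
by rewrite /longitude_img (iter_walk_pass_twist _ ok tw) b2_twist // signZ_expz // scalerMM.
Qed.

Lemma longitude_twist_sign n w c (b1 b2 : nat -> M) : (0 < n)%N ->
  braid_word_ok n w -> sign_twist n c b1 b2 ->
  exists2 t, is_sign t & longitude_img n w b2 = t *: longitude_img n w b1.
Proof.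
move=> n0 ok tw; have [c_sign _] := tw.
rewrite (longitude_twist n0 ok tw); eexists; last reflexivity.
apply: is_signM; last exact: is_sign_expz.
by apply: is_sign_prod => i; apply: is_sign_walk_sign.
Qed.

(* Each crossing is passed under exactly once in the n passes, and the writhe has the
   parity of the number of crossings, so e appears to the power 2 * size w. *)
Lemma longitude_twist_const n w e (b1 b2 : nat -> M) :
  braid_word_ok n w -> closure_is_knot n w -> sign_twist n (fun=> e) b1 b2 ->
  longitude_img n w b2 = longitude_img n w b1.
Proof.
move=> ok kn tw; have [n0 _] := kn; have e_sign : is_sign e := tw.1 0%N.
rewrite (longitude_twist n0 ok tw) sign_expz_exp_sum //.
under eq_bigr do rewrite walk_sign_const.
rewrite prodrXr -(big_mkord xpredT (fun i => under_count w (iter i (braid_perm w) 0%N))).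
rewrite -(big_map (fun i => iter i (braid_perm w) 0%N) xpredT (under_count w)).
rewrite /index_iota subn0 (perm_big _ (knot_orbit_perm ok kn)) sum_under_count //.
by rewrite -exprMn signMss // expr1n scale1r.
Qed.

Lemma sign_twist_of_pm n (b1 b2 : nat -> M) :
  (forall q, (q < n)%N -> b2 q = b1 q \/ b2 q = - b1 q) ->
  exists c, sign_twist n c b1 b2.
Proof.
move=> pm; exists (fun q => if b2 q == b1 q then 1 else -1); split=> [q|q hq].
  by case: eqP; [left|right].
case: eqP => [->|ne]; first by rewrite scale1r.
by rewrite scaleN1r; case: (pm q hq).
Qed.

Lemma det1_neq0 (A : M) : \det A = 1 -> A != 0.
Proof. by move=> detA; apply: contra_eq_neq detA => ->; rewrite det0 eq_sym oner_neq0. Qed.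

Lemma sl_lift_det n w (a h : nat -> M) : psl_rep n w a -> sl_lift n w a h ->
  forall q, (q < n)%N -> \det (h q) = 1.
Proof.
move=> [det_a _] [h_pm _] q hq.
by case: (h_pm q hq) => ->; rewrite -?scaleN1r ?detZ ?sqrrN ?expr1n ?mul1r det_a.
Qed.

Lemma sign_twist_closed_const n w c (h1 h2 : nat -> M) :
  braid_word_ok n w -> closure_is_knot n w ->
  (forall q, (q < n)%N -> h1 q != 0) ->
  (forall q, (q < n)%N -> wlabels w h1 q = h1 q) ->
  (forall q, (q < n)%N -> wlabels w h2 q = h2 q) ->
  sign_twist n c h1 h2 -> sign_twist n (fun=> c 0%N) h1 h2.
Proof.
move=> ok [n0 onto] h1_neq0 h1_closed h2_closed tw.
have [c_sign h2_twist] := tw; have [_ labels_twist] := wlabels_twist ok tw.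
have c_inv q : (q < n)%N -> c (braid_perm_inv w q) = c q.
  move=> hq; have := labels_twist q hq.
  rewrite h1_closed // h2_closed // h2_twist // => /eqP.
  rewrite -subr_eq0 -scalerBl scaler_eq0 (negbTE (h1_neq0 q hq)) orbF subr_eq0.
  by move=> /eqP ->.
have c_step p : (p < n)%N -> c (braid_perm w p) = c p.
  by move=> hp; rewrite -[in RHS](braid_permK w p) c_inv // braid_perm_lt.
have c_orbit j : c (iter j (braid_perm w) 0%N) = c 0%N.
  by elim: j => [//|j IH] /=; rewrite c_step ?iter_braid_perm_lt.
split=> [_|q hq]; first exact: c_sign.
by have [j ej] := onto q hq; rewrite h2_twist // -ej c_orbit.
Qed.

Lemma longitude_img_lift_unique n w (a h1 h2 : nat -> M) :
  braid_word_ok n w -> closure_is_knot n w -> psl_rep n w a ->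
  sl_lift n w a h1 -> sl_lift n w a h2 ->
  longitude_img n w h2 = longitude_img n w h1.
Proof.
move=> ok kn rep lift1 lift2.
have [[h1_pm h1_closed] [h2_pm h2_closed]] := (lift1, lift2).
have h1_neq0 q : (q < n)%N -> h1 q != 0.
  by move=> hq; rewrite det1_neq0 // (sl_lift_det rep lift1).
have [c tw] : exists c, sign_twist n c h1 h2.
  apply: sign_twist_of_pm => q hq.
  by case: (h1_pm q hq) => ->; case: (h2_pm q hq) => ->; rewrite ?opprK; tauto.
have := sign_twist_closed_const ok kn h1_neq0 h1_closed h2_closed tw.
exact: longitude_twist_const.
Qed.

Lemma sl_lift_opp n w (a h : nat -> M) : braid_word_ok n w ->
  sl_lift n w a h -> sl_lift n w a (fun q => - h q).
Proof.
move=> ok [h_pm h_closed].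
have tw : sign_twist n (fun=> -1) h (fun q => - h q).
  by split=> [_|q _]; [right | rewrite scaleN1r].
split=> [q hq|q hq]; first by case: (h_pm q hq) => ->; rewrite ?opprK; tauto.
by rewrite ((wlabels_twist ok tw).2 q hq) h_closed // scaleN1r.
Qed.

Lemma mxtrace_in_P (U : M) : in_P U -> \tr U = 2%:R.
Proof.
case=> _ [U00 U11]; rewrite /mxtrace big_ord_recl big_ord1.
have -> : lift ord0 ord0 = 1 :> 'I_2 by apply/val_inj.
by rewrite U00 U11.
Qed.

Lemma mxtrace_in_P_opp (U : M) : in_P (- U) -> \tr U = - 2%:R.
Proof. by move=> hU; rewrite -[U]opprK -scaleN1r mxtraceZ mxtrace_in_P // mulN1r. Qed.

Lemma mxtrace_conj (B X : M) : B \is a GRing.unit -> \tr (B^-1 * X * B) = \tr X.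
Proof. by move=> uB; rewrite -mulrA -!mulmxE mxtrace_mulC !mulmxE -mulrA mulrV ?mulr1. Qed.

Lemma det1_unit (B : M) : \det B = 1 -> B \is a GRing.unit.
Proof. by move=> detB; rewrite -[_ \is a _]/(B \in unitmx) unitmxE detB unitr1. Qed.

Lemma in_P_pm_signZ t (X : M) : is_sign t -> in_P_pm X -> in_P_pm (t *: X).
Proof. by case=> ->; rewrite ?scale1r // scaleN1r /in_P_pm opprK; case; tauto. Qed.

Lemma bp_lift_of_longitude_in_P n w (a h : nat -> M) B :
  braid_word_ok n w -> closure_is_knot n w -> psl_rep n w a -> sl_lift n w a h ->
  \det B = 1 -> in_P_pm (B^-1 * meridian_img h * B) ->
  in_P (B^-1 * longitude_img n w h * B) ->
  exists h', sl_lift n w a h' /\ sl_boundary_parabolic n w h'.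
Proof.
move=> ok kn rep lift detB [mer|merN] lon; first by exists h; split=> //; exists B.
have lift' := sl_lift_opp ok lift.
exists (fun q => - h q); split=> //; exists B; split=> //.
rewrite (longitude_img_lift_unique ok kn rep lift lift'); split=> //.
by rewrite /meridian_img mulrN mulNr.
Qed.

Lemma no_bp_lift_of_longitude_in_opp_P n w (a h : nat -> M) B :
  2%:R != 0 :> F ->
  braid_word_ok n w -> closure_is_knot n w -> psl_rep n w a -> sl_lift n w a h ->
  \det B = 1 -> in_P (- (B^-1 * longitude_img n w h * B)) ->
  ~ exists h', sl_lift n w a h' /\ sl_boundary_parabolic n w h'.
Proof.
move=> two ok kn rep lift detB lonN [h' [lift' [B' [detB' [_ lon']]]]].
have tr_pos : \tr (longitude_img n w h) = 2%:R.
  rewrite -(longitude_img_lift_unique ok kn rep lift lift').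
  by rewrite -(mxtrace_conj _ (det1_unit detB')) mxtrace_in_P.
have tr_neg : \tr (longitude_img n w h) = - 2%:R.
  by rewrite -(mxtrace_conj _ (det1_unit detB)) mxtrace_in_P_opp.
have opp2 : - 2%:R = 2%:R :> F by rewrite -tr_neg tr_pos.
have : 2%:R * 2%:R == 0 :> F by rewrite mulr_natr mulr2n -{1}opp2 addNr.
by rewrite mulf_eq0 (negbTE two).
Qed.

Theorem obstruction_class_longitude_trace n w (a : nat -> M) :
  2%:R != 0 :> F ->
  braid_word_ok n w -> closure_is_knot n w ->
  psl_rep n w a -> psl_boundary_parabolic n w a ->
  forall h, sl_lift n w a h ->
    obstruction_class n w a (\tr (longitude_img n w h) / 2%:R).
Proof.
move=> two ok kn rep [B [detB [mer lon]]] h lift.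
have [n0 _] := kn; have [c tw] := sign_twist_of_pm lift.1.
have merh : in_P_pm (B^-1 * meridian_img h * B).
  by rewrite /meridian_img tw.2 // -scalerAr -scalerAl; apply: in_P_pm_signZ (tw.1 _) mer.
have lonh : in_P_pm (B^-1 * longitude_img n w h * B).
  have [t t_sign ->] := longitude_twist_sign n0 ok tw.
  by rewrite -scalerAr -scalerAl; apply: in_P_pm_signZ t_sign lon.
rewrite -(mxtrace_conj _ (det1_unit detB)).
case: lonh => lonP; [left | right]; split.
- by rewrite mxtrace_in_P // divff.
- exact: bp_lift_of_longitude_in_P ok kn rep lift detB merh lonP.
- by rewrite mxtrace_in_P_opp // mulNr divff.
- exact: no_bp_lift_of_longitude_in_opp_P two ok kn rep lift detB lonP.
Qed.

End SignTwist.

Local Open Scope complex_scope.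

Theorem proposition2p2 (R : realType) (n : nat) (w : braid_word)
    (a : nat -> 'M[R[i]]_2) :
  braid_word_ok n w -> closure_is_knot n w ->
  psl_rep n w a -> psl_boundary_parabolic n w a ->
  forall h : nat -> 'M[R[i]]_2, sl_lift n w a h ->
    obstruction_class n w a (\tr (longitude_img n w h) / 2%:R).
Proof. by apply: obstruction_class_longitude_trace; rewrite pnatr_eq0. Qed.
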